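(* Let $L,h,\beta>0$. There exists a solution $\hat{\mathcal Z}:\mathbb{R}\to\mathbb{R}^2$ of $\ddot z=-\nabla V_\beta(z)$ with energy $\frac12|\dot z|^2+V_\beta(z)=h$ such that: (i) $\hat{\mathcal Z}(0),\hat{\mathcal Z}(T)\in\ell$ for some $T>0$ and $\hat{\mathcal Z}(t)\in\mathcal P$ for all $t\in(0,T)$; (ii) the angle between $\dot{\hat{\mathcal Z}}(0)$ and $(1,0)$ is less than $\pi/2$, and the angle between $(-1,0)$ and $\dot{\hat{\mathcal Z}}(T)$ is greater than $\pi/2$; (iii) $\operatorname{Ind}(\hat{\mathcal Z}|_{[0,T]})=1$.
   Context: $V_\beta(z)=-\frac1{|z|}-\frac{\beta}{|z|^2}$ on $\mathbb{R}^2\setminus\{0\}$; $\ell=\{(x,y):y=-L\}$; $\mathcal P=\{(x,y):y>-L\}$. Winding number: for $u:[a,b]\to\overline{\mathcal P}$ with $u(a),u(b)\in\ell$ and $u(s)\in\mathcal P\setminus\{0\}$ for all $s\in(a,b)$, let $\gamma_u$ be the closed curve obtained by concatenating $u$ with the oriented segment from $u(b)$ to $u(a)$; then $\operatorname{Ind}(u)=\frac{1}{2\pi i}\oint_{\gamma_u}\frac{dz}{z}\in\mathbb{Z}$ (the winding number of $\gamma_u$ around the origin, identifying $\mathbb{R}^2$ with $\mathbb{C}$). *)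

From Stdlib Require Import Reals.
From Coquelicot Require Import Coquelicot.
Open Scope R_scope.

Definition nrm2 (z : R * R) : R := sqrt (fst z ^ 2 + snd z ^ 2).

Definition Vb (beta : R) (z : R * R) : R := - / nrm2 z - beta / (nrm2 z ^ 2).

Definition gradVb (beta : R) (z : R * R) : R * R :=
  (Derive (fun a => Vb beta (a, snd z)) (fst z),
   Derive (fun b => Vb beta (fst z, b)) (snd z)).

Definition vel (u : R -> R * R) (t : R) : R * R :=
  (Derive (fun s => fst (u s)) t, Derive (fun s => snd (u s)) t).

Definition acc (u : R -> R * R) (t : R) : R * R :=
  (Derive_n (fun s => fst (u s)) 2 t, Derive_n (fun s => snd (u s)) 2 t).

Definition is_solution (beta : R) (u : R -> R * R) : Prop :=
  (forall t, u t <> (0, 0)) /\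
  (forall t, ex_derive (fun s => fst (u s)) t /\ ex_derive (fun s => snd (u s)) t) /\
  (forall t, ex_derive (Derive (fun s => fst (u s))) t /\
             ex_derive (Derive (fun s => snd (u s))) t) /\
  (forall t, acc u t = (- fst (gradVb beta (u t)), - snd (gradVb beta (u t)))).

Definition energy (beta : R) (u : R -> R * R) (t : R) : R :=
  / 2 * (nrm2 (vel u t)) ^ 2 + Vb beta (u t).

Definition in_ell (L : R) (z : R * R) : Prop := snd z = - L.
Definition in_P (L : R) (z : R * R) : Prop := snd z > - L.

Definition dot2 (u v : R * R) : R := fst u * fst v + snd u * snd v.
Definition angle (u v : R * R) : R := acos (dot2 u v / (nrm2 u * nrm2 v)).

Definition cint_dz_over_z (g : R -> C) (a b : R) : C :=
  RInt (V := C_R_CompleteNormedModule)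
       (fun s => Cmult (vel g s) (Cinv (g s))) a b.

Definition segment (p q : C) (s : R) : C := Cplus p (Cmult (RtoC s) (Cminus q p)).

Definition Ind (u : R -> C) (a b : R) : C :=
  Cmult (Cinv (Cmult (RtoC (2 * PI)) Ci))
        (Cplus (cint_dz_over_z u a b) (cint_dz_over_z (segment (u b) (u a)) 0 1)).

From Stdlib Require Import Reals Lra Psatz Ranalysis5 ClassicalEpsilon.
From Coquelicot Require Import Coquelicot.
Open Scope R_scope.

(* The potential is central, so along a trajectory with angular momentum c the function
   u = 1 / |z| of the polar angle solves Binet's equation u'' + (1 - 2 beta / c^2) u = 1 / c^2.
   Writing 1 - 2 beta / c^2 = k^2 with 0 < k < 1, the trajectories of energy h are
   u(th) = a + b cos (k th) with a = 1 / (c^2 k^2) and b^2 = a^2 + 2 h a.  Since b > a they are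
   unbounded, and the time law th' = c u(th)^2 integrates in closed form through the hyperbolic
   Kepler equation: th = (2/k) atan (M tanh (H/2)), t = B (e sinh H - H), with e = b / a.
   The intermediate value theorem in k gives u(PI) = 1 / L.  Measuring the polar angle from the
   upward vertical, the arc th in [-PI, PI] starts and ends at (0, -L), stays above ell since
   u(th) > u(PI) in between, has horizontal velocity c / L > 0 at both ends, and sweeps the angle
   2 PI while returning to the same radius; the closing segment is degenerate, so the index is 1. *)

Lemma gradVb_eq beta x y : 0 < x ^ 2 + y ^ 2 ->
  gradVb beta (x, y) = (x * (/ nrm2 (x, y) ^ 3 + 2 * beta / nrm2 (x, y) ^ 4),
                        y * (/ nrm2 (x, y) ^ 3 + 2 * beta / nrm2 (x, y) ^ 4)).
Proof.
  intros Hxy. unfold gradVb, Vb, nrm2; cbn [fst snd].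
  assert (Hs : 0 < sqrt (x ^ 2 + y ^ 2)) by (apply sqrt_lt_R0; lra).
  assert (Hss : sqrt (x ^ 2 + y ^ 2) ^ 2 = x ^ 2 + y ^ 2) by (apply pow2_sqrt; lra).
  f_equal; apply is_derive_unique; auto_derive;
    replace (x * (x * 1) + y * (y * 1)) with (x ^ 2 + y ^ 2) by ring;
    set (s := sqrt (x ^ 2 + y ^ 2)) in *.
  1, 3: repeat split; try lra; apply Rgt_not_eq; repeat apply Rmult_lt_0_compat; lra.
  all: field; lra.
Qed.

Lemma cos_2atan y : cos (2 * atan y) = (1 - y ^ 2) / (1 + y ^ 2).
Proof.
  rewrite cos_2a_cos, cos_atan.
  assert (Hs : 0 < 1 + y²) by (pose proof (Rle_0_sqr y); lra).
  pose proof (sqrt_lt_R0 _ Hs). pose proof (sqrt_sqrt _ (Rlt_le _ _ Hs)).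
  unfold Rsqr in *. field_simplify; [| lra ..].
  replace (sqrt (1 + y * y) ^ 2) with (1 + y * y) by (simpl; lra). field. lra.
Qed.

Lemma acos_lt_PI2 q : 0 < q -> acos q < PI / 2.
Proof.
  intros Hq. rewrite acos_atan by exact Hq.
  pose proof (atan_bound (sqrt (1 - q²) / q)). lra.
Qed.

Lemma nrm2_pos_first v1 v2 : 0 < v1 -> 0 < nrm2 (v1, v2).
Proof.
  intros Hv. apply sqrt_lt_R0; cbn [fst snd].
  pose proof (pow2_ge_0 v2). pose proof (pow_lt v1 2 Hv). lra.
Qed.

Lemma angle_e1_lt v : 0 < fst v -> angle v (1, 0) < PI / 2.
Proof.
  destruct v as [v1 v2]; cbn [fst]. intros Hv. pose proof (nrm2_pos_first v1 v2 Hv).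
  unfold angle, dot2, nrm2 at 2; cbn [fst snd].
  replace (1 ^ 2 + 0 ^ 2) with 1 by ring. rewrite sqrt_1.
  apply acos_lt_PI2, Rdiv_lt_0_compat; lra.
Qed.

Lemma angle_neg_e1_gt v : 0 < fst v -> angle (-1, 0) v > PI / 2.
Proof.
  destruct v as [v1 v2]; cbn [fst]. intros Hv. pose proof (nrm2_pos_first v1 v2 Hv).
  unfold angle, dot2, nrm2 at 1; cbn [fst snd].
  replace ((-1) ^ 2 + 0 ^ 2) with 1 by ring. rewrite sqrt_1.
  replace ((-1 * v1 + 0 * v2) / (1 * nrm2 (v1, v2))) with (- (v1 / nrm2 (v1, v2)))
    by (field; lra).
  rewrite acos_opp.
  pose proof (acos_lt_PI2 (v1 / nrm2 (v1, v2)) ltac:(apply Rdiv_lt_0_compat; lra)).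
  lra.
Qed.

Lemma is_RInt_eq_val (f : R -> R) a b l l' : is_RInt f a b l -> l = l' -> is_RInt f a b l'.
Proof. intros Hf <-. exact Hf. Qed.

Lemma cint_dz_over_z_segment_refl (p : C) : cint_dz_over_z (segment p p) 0 1 = RtoC 0.
Proof.
  destruct p as [p1 p2].
  assert (Hv : forall s, vel (segment (p1, p2) (p1, p2)) s = (0, 0)).
  { intros s. unfold vel.
    rewrite (Derive_ext (fun t => fst (segment (p1, p2) (p1, p2) t)) (fun _ => p1)),
      (Derive_ext (fun t => snd (segment (p1, p2) (p1, p2) t)) (fun _ => p2));
      [now rewrite !Derive_const | ..];
      intros t; unfold segment, Cminus, Copp, Cplus, Cmult, RtoC; cbn [fst snd]; ring. }
  unfold cint_dz_over_z. apply (is_RInt_unique (V := C_R_CompleteNormedModule)).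
  apply (is_RInt_ext (V := C_R_CompleteNormedModule) (fun _ => (0, 0))).
  - intros x _. rewrite Hv. unfold Cmult; cbn [fst snd]. f_equal; ring.
  - apply (is_RInt_fct_extend_pair (U := R_NormedModule) (V := R_NormedModule)); cbn [fst snd];
      apply (is_RInt_eq_val _ _ _ _ _ (is_RInt_const 0 1 0));
      unfold scal; simpl; unfold mult; simpl; ring.
Qed.

(* Junk value when y is not in the range of f. *)
Definition inv_fun (f : R -> R) (y : R) : R := epsilon (inhabits 0) (fun x => f x = y).

Section ExpandingInverse.

Variables (f df : R -> R) (m : R).
Hypotheses (Hm : 0 < m) (f_deriv : forall x, is_derive f x (df x))
  (df_ge : forall x, m <= df x).

Lemma expanding_continuous : continuity f.
Proof.
  intros x. apply continuity_pt_filterlim, (ex_derive_continuous f).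
  eexists; apply f_deriv.
Qed.

Lemma expanding_growth x y : x <= y -> m * (y - x) <= f y - f x.
Proof.
  intros Hxy. destruct (MVT_gen f x y df) as [z [_ ->]].
  - intros; apply f_deriv.
  - intros; apply expanding_continuous.
  - apply Rmult_le_compat_r; [lra | apply df_ge].
Qed.

Lemma expanding_lt x y : x < y -> f x < f y.
Proof.
  intros Hxy. pose proof (expanding_growth x y (Rlt_le _ _ Hxy)).
  pose proof (Rmult_lt_0_compat m (y - x) Hm ltac:(lra)). lra.
Qed.

Lemma expanding_surjective y : exists x, f x = y.
Proof.
  set (X := Rabs (y - f 0) / m).
  assert (HmX : m * X = Rabs (y - f 0)) by (unfold X; field; lra).
  assert (HX : 0 <= X) by (apply Rdiv_le_0_compat; [apply Rabs_pos | lra]).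
  pose proof (expanding_growth 0 X HX). pose proof (expanding_growth (- X) 0 ltac:(lra)).
  pose proof (Rle_abs (y - f 0)). pose proof (Rle_abs (- (y - f 0))).
  rewrite Rabs_Ropp in *.
  destruct (IVT_gen f (- X) X y expanding_continuous) as [x [_ Hx]].
  - rewrite Rmin_left, Rmax_right by lra. lra.
  - exists x; exact Hx.
Qed.

Lemma expanding_inv_rcancel y : f (inv_fun f y) = y.
Proof. apply (epsilon_spec (inhabits 0) (fun x => f x = y)), expanding_surjective. Qed.

Lemma expanding_inv_lcancel x : inv_fun f (f x) = x.
Proof.
  pose proof (expanding_inv_rcancel (f x)).
  destruct (Rtotal_order (inv_fun f (f x)) x) as [Hlt | [Heq | Hgt]]; auto.
  - apply expanding_lt in Hlt. lra.
  - apply expanding_lt in Hgt. lra.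
Qed.

Lemma expanding_inv_le_lt x y : x < y -> inv_fun f x < inv_fun f y.
Proof.
  intros Hxy. destruct (Rlt_or_le (inv_fun f x) (inv_fun f y)) as [Hlt | Hle]; auto.
  pose proof (expanding_inv_rcancel x). pose proof (expanding_inv_rcancel y).
  destruct Hle as [Hlt | Heq].
  - apply expanding_lt in Hlt. lra.
  - rewrite Heq in *. lra.
Qed.

Lemma expanding_inv_le x y : x <= y -> inv_fun f x <= inv_fun f y.
Proof.
  intros [Hlt | ->]; [left; apply expanding_inv_le_lt, Hlt | apply Rle_refl].
Qed.

Lemma expanding_inv_continuous y : continuity_pt (inv_fun f) y.
Proof.
  set (g := inv_fun f).
  apply (continuity_pt_recip_interv f g (g y - 1) (g y + 1)).
  - lra.
  - intros x z _ Hxz _. apply expanding_lt, Hxz.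
  - intros x _ _. apply expanding_inv_rcancel.
  - intros x Hx1 Hx2. apply expanding_inv_le in Hx1, Hx2.
    unfold g in *. rewrite !expanding_inv_lcancel in *. lra.
  - intros a _. apply expanding_continuous.
  - rewrite <- (expanding_inv_rcancel y) at 2 3. split; apply expanding_lt; unfold g; lra.
Qed.

Lemma is_derive_expanding_inv y : is_derive (inv_fun f) y (/ df (inv_fun f y)).
Proof.
  apply is_derive_Reals.
  assert (Hi : inv_fun f (y - 1) <= inv_fun f y <= inv_fun f (y + 1))
    by (split; apply expanding_inv_le; lra).
  pose (f_dpt := fun a => exist (fun l => derivable_pt_abs f a l) (df a)
                            (proj1 (is_derive_Reals f a (df a)) (f_deriv a))).
  pose proof (derivable_pt_lim_recip_interv f (inv_fun f) (y - 1) (y + 1) y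
    (fun a _ => f_dpt a) (expanding_inv_continuous y) ltac:(lra) ltac:(lra) Hi) as Hd.
  simpl in Hd. replace (/ df (inv_fun f y)) with (1 / df (inv_fun f y)) by (unfold Rdiv; ring).
  apply Hd.
  - intros x _. apply expanding_inv_rcancel.
  - pose proof (df_ge (inv_fun f y)). lra.
Qed.

End ExpandingInverse.

Section Orbit.

Variables beta h k : R.
Hypotheses (Hb : 0 < beta) (Hh : 0 < h) (Hk : 0 < k < 1).

Definition ang_mom := sqrt (2 * beta / (1 - k ^ 2)).
Definition binet_a := (1 - k ^ 2) / (2 * beta * k ^ 2).
Definition binet_b := sqrt (binet_a ^ 2 + 2 * h * binet_a).
Definition binet_u (th : R) := binet_a + binet_b * cos (k * th).
Definition binet_du (th : R) := - (binet_b * k * sin (k * th)).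
Definition binet_ddu (th : R) := - (binet_b * k ^ 2 * cos (k * th)).

Lemma one_sub_k2_pos : 0 < 1 - k ^ 2.
Proof. nra. Qed.

Lemma ang_mom_pos : 0 < ang_mom.
Proof.
  pose proof one_sub_k2_pos. apply sqrt_lt_R0, Rdiv_lt_0_compat; lra.
Qed.

Lemma ang_mom_sq : ang_mom ^ 2 * (1 - k ^ 2) = 2 * beta.
Proof.
  pose proof one_sub_k2_pos. unfold ang_mom.
  rewrite pow2_sqrt by (apply Rlt_le, Rdiv_lt_0_compat; lra). field. lra.
Qed.

Lemma binet_a_pos : 0 < binet_a.
Proof.
  pose proof one_sub_k2_pos. pose proof (pow_lt k 2 (proj1 Hk)).
  apply Rdiv_lt_0_compat; [lra | apply Rmult_lt_0_compat; lra].
Qed.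

Lemma binet_a_ang_mom : binet_a * ang_mom ^ 2 * k ^ 2 = 1.
Proof.
  pose proof one_sub_k2_pos. unfold binet_a, ang_mom.
  rewrite pow2_sqrt by (apply Rlt_le, Rdiv_lt_0_compat; lra). field. lra.
Qed.

Lemma binet_b_sq : binet_b ^ 2 = binet_a ^ 2 + 2 * h * binet_a.
Proof. pose proof binet_a_pos. apply pow2_sqrt. nra. Qed.

Lemma binet_a_lt_b : binet_a < binet_b.
Proof.
  pose proof binet_a_pos. pose proof binet_b_sq.
  assert (0 <= binet_b) by apply sqrt_pos. nra.
Qed.

Lemma binet_force th : ang_mom ^ 2 * (binet_u th + binet_ddu th) = 1 + 2 * beta * binet_u th.
Proof.
  pose proof binet_a_ang_mom as Ha. pose proof ang_mom_sq as Hc. unfold binet_u, binet_ddu.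
  set (C := cos (k * th)).
  assert (E : ang_mom ^ 2 * (binet_a + binet_b * C + - (binet_b * k ^ 2 * C))
              - (1 + 2 * beta * (binet_a + binet_b * C))
            = (binet_a * ang_mom ^ 2 * k ^ 2 - 1)
              + (binet_a + binet_b * C) * (ang_mom ^ 2 * (1 - k ^ 2) - 2 * beta)) by ring.
  rewrite Ha, Hc in E. lra.
Qed.

Lemma binet_energy th :
  / 2 * (ang_mom ^ 2 * (binet_u th ^ 2 + binet_du th ^ 2)) - binet_u th
    - beta * binet_u th ^ 2 = h.
Proof.
  pose proof binet_a_ang_mom as Ha. pose proof ang_mom_sq as Hc. pose proof binet_b_sq as Hb2.
  unfold binet_u, binet_du. set (C := cos (k * th)). set (S := sin (k * th)).
  assert (SC : S ^ 2 = 1 - C ^ 2)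
    by (pose proof (sin2_cos2 (k * th)); unfold Rsqr in *; simpl; unfold S, C; lra).
  replace ((- (binet_b * k * S)) ^ 2) with (binet_b ^ 2 * k ^ 2 * S ^ 2) by ring.
  rewrite SC.
  assert (E : / 2 * (ang_mom ^ 2 * ((binet_a + binet_b * C) ^ 2
                 + binet_b ^ 2 * k ^ 2 * (1 - C ^ 2))) - (binet_a + binet_b * C)
              - beta * (binet_a + binet_b * C) ^ 2 - h
            = (binet_a + binet_b * C) ^ 2 / 2 * (ang_mom ^ 2 * (1 - k ^ 2) - 2 * beta)
              + (binet_a + h + binet_b * C) * (binet_a * ang_mom ^ 2 * k ^ 2 - 1)
              + / 2 * ang_mom ^ 2 * k ^ 2 * (binet_b ^ 2 - (binet_a ^ 2 + 2 * h * binet_a)))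
    by field.
  rewrite Ha, Hc, Hb2 in E. rewrite Hb2. apply Rminus_diag_uniq. rewrite E. field.
Qed.

Definition ecc := binet_b / binet_a.
Definition kepler_M := sqrt ((binet_a + binet_b) / (binet_b - binet_a)).
Definition kepler_B := kepler_M / (k * ang_mom * (ecc - 1) * (binet_a + binet_b) ^ 2).
Definition tanh_half (H : R) := (exp H - 1) / (exp H + 1).
Definition kepler_time (H : R) := kepler_B * (ecc * sinh H - H).
Definition kepler_time' (H : R) := kepler_B * (ecc * cosh H - 1).
Definition kepler_angle (H : R) := 2 / k * atan (kepler_M * tanh_half H).
Definition kepler_angle' (H : R) :=
  2 / k * (kepler_M * (2 * exp H / (exp H + 1) ^ 2) / (1 + (kepler_M * tanh_half H) ^ 2)).

Lemma kepler_M_pos : 0 < kepler_M.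
Proof.
  pose proof binet_a_pos. pose proof binet_a_lt_b.
  apply sqrt_lt_R0, Rdiv_lt_0_compat; lra.
Qed.

Lemma kepler_M_sq : kepler_M ^ 2 = (binet_a + binet_b) / (binet_b - binet_a).
Proof.
  pose proof binet_a_pos. pose proof binet_a_lt_b.
  apply pow2_sqrt, Rlt_le, Rdiv_lt_0_compat; lra.
Qed.

Lemma ecc_gt_1 : 1 < ecc.
Proof.
  pose proof binet_a_pos. pose proof binet_a_lt_b. unfold ecc.
  apply (Rmult_lt_reg_r binet_a); [lra |]. unfold Rdiv. rewrite Rmult_assoc, Rinv_l; lra.
Qed.

Lemma kepler_B_pos : 0 < kepler_B.
Proof.
  pose proof binet_a_pos. pose proof binet_a_lt_b. pose proof ecc_gt_1.
  pose proof kepler_M_pos. pose proof ang_mom_pos. pose proof (pow_lt (binet_a + binet_b) 2).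
  apply Rdiv_lt_0_compat; [lra |]. repeat apply Rmult_lt_0_compat; lra.
Qed.

Lemma is_derive_kepler_time H : is_derive kepler_time H (kepler_time' H).
Proof. unfold kepler_time, kepler_time', sinh, cosh. auto_derive; [auto | field]. Qed.

Lemma cosh_ge_1 H : 1 <= cosh H.
Proof.
  unfold cosh. rewrite exp_Ropp. pose proof (exp_pos H).
  assert (E : exp H + / exp H - 2 = (exp H - 1) ^ 2 / exp H) by (field; lra).
  pose proof (Rdiv_le_0_compat ((exp H - 1) ^ 2) (exp H) (pow2_ge_0 _) ltac:(lra)).
  lra.
Qed.

Lemma kepler_time'_ge H : kepler_B * (ecc - 1) <= kepler_time' H.
Proof.
  pose proof kepler_B_pos. pose proof ecc_gt_1. pose proof (cosh_ge_1 H).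
  unfold kepler_time'. apply Rmult_le_compat_l; nra.
Qed.

Lemma kepler_time_opp H : kepler_time (- H) = - kepler_time H.
Proof. unfold kepler_time, sinh. rewrite Ropp_involutive. field. Qed.

Lemma tanh_half_bound H : -1 < tanh_half H < 1.
Proof.
  unfold tanh_half. pose proof (exp_pos H).
  split; apply (Rmult_lt_reg_r (exp H + 1)); try lra;
    unfold Rdiv; rewrite Rmult_assoc, Rinv_l; lra.
Qed.

Lemma tanh_half_opp H : tanh_half (- H) = - tanh_half H.
Proof. unfold tanh_half. rewrite exp_Ropp. pose proof (exp_pos H). field. lra. Qed.

Lemma tanh_half_lt x y : x < y -> tanh_half x < tanh_half y.
Proof.
  intros Hxy. unfold tanh_half. pose proof (exp_pos x). pose proof (exp_pos y).
  pose proof (exp_increasing _ _ Hxy).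
  apply (Rmult_lt_reg_r ((exp x + 1) * (exp y + 1))); [nra |].
  field_simplify; lra.
Qed.

Lemma is_derive_kepler_angle H : is_derive kepler_angle H (kepler_angle' H).
Proof.
  unfold kepler_angle, kepler_angle', tanh_half. pose proof (exp_pos H).
  pose proof (pow_lt (exp H + 1) 2 ltac:(lra)).
  pose proof (pow2_ge_0 (kepler_M * (exp H - 1))).
  auto_derive; [lra |]. field. repeat split; lra.
Qed.

Lemma kepler_angle_opp H : kepler_angle (- H) = - kepler_angle H.
Proof.
  unfold kepler_angle. rewrite tanh_half_opp, <- Ropp_mult_distr_r, atan_opp. ring.
Qed.

Lemma kepler_angle_lt x y : x < y -> kepler_angle x < kepler_angle y.
Proof.
  intros Hxy. unfold kepler_angle. apply Rmult_lt_compat_l.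
  - apply Rdiv_lt_0_compat; lra.
  - apply atan_increasing, Rmult_lt_compat_l; [apply kepler_M_pos | apply tanh_half_lt, Hxy].
Qed.

Lemma binet_u_kepler_angle H :
  binet_u (kepler_angle H)
  = (binet_a + binet_b) * (1 - tanh_half H ^ 2) / (1 + kepler_M ^ 2 * tanh_half H ^ 2).
Proof.
  unfold binet_u, kepler_angle.
  replace (k * (2 / k * atan (kepler_M * tanh_half H))) with (2 * atan (kepler_M * tanh_half H))
    by (field; lra).
  rewrite cos_2atan, Rpow_mult_distr, kepler_M_sq.
  pose proof binet_a_pos. pose proof binet_a_lt_b.
  assert (0 <= (binet_a + binet_b) * tanh_half H ^ 2)
    by (apply Rmult_le_pos; [lra | apply pow2_ge_0]).
  field. split; lra.
Qed.

Lemma binet_u_kepler_angle_pos H : 0 < binet_u (kepler_angle H).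
Proof.
  rewrite binet_u_kepler_angle. pose proof binet_a_pos. pose proof binet_a_lt_b.
  pose proof (tanh_half_bound H).
  pose proof (Rmult_le_pos _ _ (pow2_ge_0 kepler_M) (pow2_ge_0 (tanh_half H))).
  apply Rdiv_lt_0_compat; [apply Rmult_lt_0_compat; simpl; nra | lra].
Qed.

(* kepler_B is chosen to make this hold: it is the law th' = c u(th)^2 in the variable H. *)
Lemma kepler_areal_law H :
  kepler_angle' H / kepler_time' H = ang_mom * binet_u (kepler_angle H) ^ 2.
Proof.
  rewrite binet_u_kepler_angle. unfold kepler_angle', kepler_time', kepler_B, ecc, tanh_half, cosh.
  rewrite exp_Ropp. pose proof (exp_pos H) as HE.
  pose proof binet_a_pos. pose proof binet_a_lt_b. pose proof kepler_M_pos. pose proof ang_mom_pos.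
  set (E := exp H) in *.
  replace ((kepler_M * ((E - 1) / (E + 1))) ^ 2) with (kepler_M ^ 2 * ((E - 1) / (E + 1)) ^ 2)
    by ring.
  rewrite kepler_M_sq.
  assert (0 < (binet_b - binet_a) * (E + 1) ^ 2)
    by (apply Rmult_lt_0_compat; [lra | apply pow_lt; lra]).
  assert (0 <= (binet_a + binet_b) * (E - 1) ^ 2)
    by (apply Rmult_le_pos; [lra | apply pow2_ge_0]).
  assert (2 * E <= E * E + 1) by (pose proof (pow2_ge_0 (E - 1)); simpl in *; lra).
  assert (binet_b * (2 * E) <= binet_b * (E * E + 1)) by (apply Rmult_le_compat_l; lra).
  assert (binet_a * E < binet_b * E) by (apply Rmult_lt_compat_r; lra).
  field. repeat split; lra.
Qed.

Lemma kepler_time'_lb_pos : 0 < kepler_B * (ecc - 1).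
Proof. pose proof kepler_B_pos. pose proof ecc_gt_1. nra. Qed.

Lemma inv_kepler_time H : inv_fun kepler_time (kepler_time H) = H.
Proof.
  exact (expanding_inv_lcancel _ _ _ kepler_time'_lb_pos is_derive_kepler_time kepler_time'_ge H).
Qed.

Lemma inv_kepler_time_lt x y : x < y -> inv_fun kepler_time x < inv_fun kepler_time y.
Proof.
  exact (expanding_inv_le_lt _ _ _ kepler_time'_lb_pos is_derive_kepler_time kepler_time'_ge x y).
Qed.

Definition polar_angle (t : R) := kepler_angle (inv_fun kepler_time t).

Lemma is_derive_polar_angle t :
  is_derive polar_angle t (ang_mom * binet_u (polar_angle t) ^ 2).
Proof.
  unfold polar_angle. rewrite <- kepler_areal_law.
  replace (kepler_angle' (inv_fun kepler_time t) / kepler_time' (inv_fun kepler_time t))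
    with (scal (/ kepler_time' (inv_fun kepler_time t)) (kepler_angle' (inv_fun kepler_time t)))
    by (unfold scal; simpl; unfold mult; simpl; unfold Rdiv; ring).
  apply (is_derive_comp kepler_angle).
  - apply is_derive_kepler_angle.
  - exact (is_derive_expanding_inv _ _ _ kepler_time'_lb_pos is_derive_kepler_time
             kepler_time'_ge t).
Qed.

(* The point at distance 1 / u th and polar angle th + PI / 2. *)
Definition binet_point (th : R) : R * R := (- sin th / binet_u th, cos th / binet_u th).
Definition binet_vx (th : R) := ang_mom * (- cos th * binet_u th + sin th * binet_du th).
Definition binet_vy (th : R) := ang_mom * (- sin th * binet_u th - cos th * binet_du th).
Definition binet_ax (th : R) :=
  ang_mom ^ 2 * binet_u th ^ 2 * sin th * (binet_u th + binet_ddu th).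
Definition binet_ay (th : R) :=
  - (ang_mom ^ 2 * binet_u th ^ 2 * cos th * (binet_u th + binet_ddu th)).

Lemma binet_point_sq th : 0 < binet_u th ->
  fst (binet_point th) ^ 2 + snd (binet_point th) ^ 2 = (/ binet_u th) ^ 2.
Proof.
  intros Hu. unfold binet_point; cbn [fst snd].
  pose proof (sin2_cos2 th) as Hsc. unfold Rsqr in Hsc.
  replace ((- sin th / binet_u th) ^ 2 + (cos th / binet_u th) ^ 2)
    with ((sin th * sin th + cos th * cos th) / binet_u th ^ 2) by (field; lra).
  rewrite Hsc. field. lra.
Qed.

Lemma nrm2_binet_point th : 0 < binet_u th -> nrm2 (binet_point th) = / binet_u th.
Proof.
  intros Hu. unfold nrm2. rewrite binet_point_sq by exact Hu.
  apply sqrt_pow2, Rlt_le, Rinv_0_lt_compat, Hu.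
Qed.

Lemma binet_acc_gradVb th : 0 < binet_u th ->
  (binet_ax th, binet_ay th)
  = (- fst (gradVb beta (binet_point th)), - snd (gradVb beta (binet_point th))).
Proof.
  intros Hu. pose proof (binet_point_sq th Hu) as Hsq.
  pose proof (pow_lt _ 2 (Rinv_0_lt_compat _ Hu)).
  rewrite (surjective_pairing (binet_point th)), gradVb_eq by lra.
  rewrite <- surjective_pairing, nrm2_binet_point by exact Hu.
  unfold binet_point, binet_ax, binet_ay; cbn [fst snd].
  pose proof (binet_force th) as Hf. set (u := binet_u th) in *.
  f_equal; [ replace (ang_mom ^ 2 * u ^ 2 * sin th * (u + binet_ddu th))
               with (u ^ 2 * sin th * (ang_mom ^ 2 * (u + binet_ddu th))) by ring
           | replace (ang_mom ^ 2 * u ^ 2 * cos th * (u + binet_ddu th))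
               with (u ^ 2 * cos th * (ang_mom ^ 2 * (u + binet_ddu th))) by ring ];
    rewrite Hf; field; lra.
Qed.

Lemma binet_point_energy th : 0 < binet_u th ->
  / 2 * nrm2 (binet_vx th, binet_vy th) ^ 2 + Vb beta (binet_point th) = h.
Proof.
  intros Hu. unfold Vb. rewrite nrm2_binet_point by exact Hu.
  unfold nrm2; cbn [fst snd].
  rewrite pow2_sqrt by (apply Rplus_le_le_0_compat; apply pow2_ge_0).
  rewrite <- (binet_energy th).
  pose proof (sin2_cos2 th) as Hsc. unfold Rsqr in Hsc. unfold binet_vx, binet_vy.
  replace ((ang_mom * (- cos th * binet_u th + sin th * binet_du th)) ^ 2
           + (ang_mom * (- sin th * binet_u th - cos th * binet_du th)) ^ 2)
    with (ang_mom ^ 2 * (binet_u th ^ 2 + binet_du th ^ 2) * (sin th * sin th + cos th * cos th))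
    by ring.
  rewrite Hsc. field. lra.
Qed.

(* Along the orbit dz/z = d(ln r) + i d(theta), with r = 1 / u and theta = th + PI/2. *)
Lemma binet_dz_over_z th : 0 < binet_u th ->
  Cmult (binet_vx th, binet_vy th) (Cinv (binet_point th))
  = (- (ang_mom * binet_du th * binet_u th), ang_mom * binet_u th ^ 2).
Proof.
  intros Hu. unfold binet_point, Cmult, Cinv; cbn [fst snd].
  pose proof (sin2_cos2 th) as Hsc. unfold Rsqr in Hsc.
  assert (sin th ^ 2 + cos th ^ 2 = 1) by (simpl; lra).
  assert (cos th ^ 2 + sin th ^ 2 = 1) by (simpl; lra).
  unfold binet_vx, binet_vy. f_equal; field; repeat split; lra.
Qed.

Lemma is_derive_binet_x th : 0 < binet_u th ->
  is_derive (fun x => fst (binet_point x)) th (binet_vx th / (ang_mom * binet_u th ^ 2)).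
Proof.
  intros Hu. pose proof ang_mom_pos.
  unfold binet_point, binet_vx, binet_du, binet_u in *; cbn [fst].
  auto_derive; [lra | field; lra].
Qed.

Lemma is_derive_binet_y th : 0 < binet_u th ->
  is_derive (fun x => snd (binet_point x)) th (binet_vy th / (ang_mom * binet_u th ^ 2)).
Proof.
  intros Hu. pose proof ang_mom_pos.
  unfold binet_point, binet_vy, binet_du, binet_u in *; cbn [snd].
  auto_derive; [lra | field; lra].
Qed.

Lemma is_derive_binet_vx th : 0 < binet_u th ->
  is_derive binet_vx th (binet_ax th / (ang_mom * binet_u th ^ 2)).
Proof.
  intros Hu. pose proof ang_mom_pos.
  unfold binet_ax, binet_vx, binet_du, binet_ddu, binet_u in *.
  auto_derive; [auto | field; lra].
Qed.

Lemma is_derive_binet_vy th : 0 < binet_u th ->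
  is_derive binet_vy th (binet_ay th / (ang_mom * binet_u th ^ 2)).
Proof.
  intros Hu. pose proof ang_mom_pos.
  unfold binet_ay, binet_vy, binet_du, binet_ddu, binet_u in *.
  auto_derive; [auto | field; lra].
Qed.

Lemma is_derive_binet_log_u th : 0 < binet_u th ->
  is_derive (fun x => - ln (binet_u x)) th
    (- (ang_mom * binet_du th * binet_u th) / (ang_mom * binet_u th ^ 2)).
Proof.
  intros Hu. pose proof ang_mom_pos. unfold binet_du, binet_u in *.
  auto_derive; [lra | field; lra].
Qed.

Section AlongAnAngle.

Variable psi : R -> R.
Hypotheses (psi_deriv : forall t, is_derive psi t (ang_mom * binet_u (psi t) ^ 2))
  (psi_pos : forall t, 0 < binet_u (psi t)).

Lemma is_derive_along (f g : R -> R) t :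
  (forall th, 0 < binet_u th -> is_derive f th (g th / (ang_mom * binet_u th ^ 2))) ->
  is_derive (fun s => f (psi s)) t (g (psi t)).
Proof.
  intros Hf. pose proof ang_mom_pos. pose proof (psi_pos t).
  replace (g (psi t))
    with (scal (ang_mom * binet_u (psi t) ^ 2) (g (psi t) / (ang_mom * binet_u (psi t) ^ 2)))
    by (unfold scal; simpl; unfold mult; simpl; field; lra).
  apply (is_derive_comp f psi); [apply Hf, psi_pos | apply psi_deriv].
Qed.

Lemma continuous_along (f : R -> R) t :
  (forall x, ex_derive f x) -> continuous (fun s => f (psi s)) t.
Proof.
  intros Hf. apply (continuous_comp psi f); apply (ex_derive_continuous (V := R_NormedModule)).
  - eexists; apply psi_deriv.
  - apply Hf.
Qed.

Definition orbit (t : R) := binet_point (psi t).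

Lemma vel_orbit t : vel orbit t = (binet_vx (psi t), binet_vy (psi t)).
Proof.
  unfold vel, orbit. f_equal; apply is_derive_unique.
  - apply (is_derive_along (fun x => fst (binet_point x))), is_derive_binet_x.
  - apply (is_derive_along (fun x => snd (binet_point x))), is_derive_binet_y.
Qed.

Lemma is_derive_orbit_vx t : is_derive (fun s => binet_vx (psi s)) t (binet_ax (psi t)).
Proof. apply (is_derive_along binet_vx), is_derive_binet_vx. Qed.

Lemma is_derive_orbit_vy t : is_derive (fun s => binet_vy (psi s)) t (binet_ay (psi t)).
Proof. apply (is_derive_along binet_vy), is_derive_binet_vy. Qed.

Lemma orbit_solution : is_solution beta orbit.
Proof.
  assert (Hvx : forall t, Derive (fun s => fst (orbit s)) t = binet_vx (psi t))
    by (intros t; exact (f_equal fst (vel_orbit t))).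
  assert (Hvy : forall t, Derive (fun s => snd (orbit s)) t = binet_vy (psi t))
    by (intros t; exact (f_equal snd (vel_orbit t))).
  split; [| split; [| split]].
  - intros t Ht. pose proof (binet_point_sq _ (psi_pos t)) as Hsq.
    pose proof (pow_lt _ 2 (Rinv_0_lt_compat _ (psi_pos t))).
    fold (orbit t) in Hsq. rewrite Ht in Hsq. simpl in Hsq. lra.
  - intros t; split; eexists.
    + apply (is_derive_along (fun x => fst (binet_point x))), is_derive_binet_x.
    + apply (is_derive_along (fun x => snd (binet_point x))), is_derive_binet_y.
  - intros t; split.
    + apply (ex_derive_ext (fun s => binet_vx (psi s))); [intros s; symmetry; apply Hvx |].
      eexists; apply is_derive_orbit_vx.
    + apply (ex_derive_ext (fun s => binet_vy (psi s))); [intros s; symmetry; apply Hvy |].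
      eexists; apply is_derive_orbit_vy.
  - intros t. unfold acc; simpl Derive_n.
    rewrite (Derive_ext _ _ _ Hvx), (Derive_ext _ _ _ Hvy).
    assert (Hax : Derive (fun s => binet_vx (psi s)) t = binet_ax (psi t))
      by apply is_derive_unique, is_derive_orbit_vx.
    assert (Hay : Derive (fun s => binet_vy (psi s)) t = binet_ay (psi t))
      by apply is_derive_unique, is_derive_orbit_vy.
    rewrite Hax, Hay.
    apply binet_acc_gradVb, psi_pos.
Qed.

Lemma orbit_energy t : energy beta orbit t = h.
Proof. unfold energy. rewrite vel_orbit. apply binet_point_energy, psi_pos. Qed.

Lemma cint_dz_over_z_orbit a b :
  cint_dz_over_z orbit a b
  = (ln (binet_u (psi a)) - ln (binet_u (psi b)), psi b - psi a).
Proof.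
  unfold cint_dz_over_z. apply (is_RInt_unique (V := C_R_CompleteNormedModule)).
  apply (is_RInt_ext (V := C_R_CompleteNormedModule)
    (fun t => (- (ang_mom * binet_du (psi t) * binet_u (psi t)), ang_mom * binet_u (psi t) ^ 2))).
  { intros t _. rewrite vel_orbit. symmetry. apply binet_dz_over_z, psi_pos. }
  apply (is_RInt_fct_extend_pair (U := R_NormedModule) (V := R_NormedModule)); cbn [fst snd].
  - refine (is_RInt_eq_val _ _ _ _ _ (is_RInt_derive (fun s => - ln (binet_u (psi s))) _ a b
              (fun t _ => is_derive_along _ _ t is_derive_binet_log_u) _) _).
    + intros t _. apply (continuous_along (fun x => - (ang_mom * binet_du x * binet_u x))).
      intros x. unfold binet_du, binet_u. auto_derive; auto.
    + unfold minus, plus, opp; simpl. ring.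
  - refine (is_RInt_eq_val _ _ _ _ _ (is_RInt_derive _ _ a b (fun t _ => psi_deriv t) _) _).
    + intros t _. apply (continuous_along (fun x => ang_mom * binet_u x ^ 2)).
      intros x. unfold binet_u. auto_derive; auto.
    + unfold minus, plus, opp; simpl. ring.
Qed.

End AlongAnAngle.

Lemma binet_u_even th : binet_u (- th) = binet_u th.
Proof. unfold binet_u. replace (k * - th) with (- (k * th)) by ring. now rewrite cos_neg. Qed.

Lemma binet_u_PI_lt th : - PI < th < PI -> binet_u PI < binet_u th.
Proof.
  intros Hth. pose proof PI_RGT_0. pose proof binet_a_pos. pose proof binet_a_lt_b.
  assert (Hk1 : k * PI < PI) by (pose proof (Rmult_lt_compat_r PI k 1); lra).
  assert (Habs : k * Rabs th < k * PI)
    by (apply Rmult_lt_compat_l; [lra | unfold Rabs; destruct (Rcase_abs th); lra]).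
  assert (0 <= k * Rabs th) by (apply Rmult_le_pos; [lra | apply Rabs_pos]).
  assert (Hc : cos (k * th) = cos (k * Rabs th)).
  { unfold Rabs. destruct (Rcase_abs th); [| reflexivity].
    rewrite <- cos_neg. f_equal. ring. }
  unfold binet_u. rewrite Hc. apply Rplus_lt_compat_l, Rmult_lt_compat_l; [lra |].
  apply cos_decreasing_1; lra.
Qed.

Section Crossing.

Variable L : R.
Hypotheses (HL : 0 < L) (Hu_PI : binet_u PI = / L).

Lemma k_PI_half_bound : 0 < k * PI / 2 < PI / 2.
Proof.
  pose proof PI_RGT_0. pose proof (Rmult_lt_compat_r PI k 1 ltac:(lra) ltac:(lra)). nra.
Qed.

Definition tan_k_PI_half := tan (k * PI / 2).

Lemma tan_k_PI_half_pos : 0 < tan_k_PI_half.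
Proof. pose proof k_PI_half_bound. apply tan_gt_0; lra. Qed.

(* kepler_angle ranges over (-(2/k) atan M, (2/k) atan M); u(PI) > 0 puts PI in that range. *)
Lemma tan_k_PI_half_lt_M : tan_k_PI_half < kepler_M.
Proof.
  pose proof k_PI_half_bound. pose proof tan_k_PI_half_pos. pose proof kepler_M_pos as HM.
  pose proof binet_a_pos. pose proof binet_a_lt_b.
  assert (HuP : 0 < binet_u PI) by (rewrite Hu_PI; apply Rinv_0_lt_compat, HL).
  unfold binet_u in HuP.
  replace (k * PI) with (2 * atan tan_k_PI_half) in HuP
    by (unfold tan_k_PI_half; rewrite atan_tan by lra; field).
  rewrite cos_2atan in HuP. set (T := tan_k_PI_half) in *.
  assert (HT : 0 < 1 + T ^ 2) by (pose proof (pow2_ge_0 T); lra).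
  assert (Hlt : T ^ 2 < kepler_M ^ 2).
  { rewrite kepler_M_sq. apply (Rmult_lt_reg_r (binet_b - binet_a)); [lra |].
    replace ((binet_a + binet_b) / (binet_b - binet_a) * (binet_b - binet_a))
      with (binet_a + binet_b) by (field; lra).
    replace (binet_a + binet_b * ((1 - T ^ 2) / (1 + T ^ 2)))
      with ((binet_a + binet_b - (binet_b - binet_a) * T ^ 2) / (1 + T ^ 2)) in HuP
      by (field; lra).
    apply Rdiv_pos_cases in HuP. lra. }
  destruct (Rlt_or_le T kepler_M) as [Hl | Hle]; [exact Hl |].
  pose proof (pow_incr _ _ 2 (conj (Rlt_le _ _ HM) Hle)). lra.
Qed.

Definition crossing_anomaly :=
  ln ((1 + tan_k_PI_half / kepler_M) / (1 - tan_k_PI_half / kepler_M)).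

Lemma tan_k_PI_half_div_M_bound : 0 < tan_k_PI_half / kepler_M < 1.
Proof.
  pose proof tan_k_PI_half_pos. pose proof tan_k_PI_half_lt_M. pose proof kepler_M_pos.
  split; [apply Rdiv_lt_0_compat; lra |].
  apply (Rmult_lt_reg_r kepler_M); [lra |]. unfold Rdiv. rewrite Rmult_assoc, Rinv_l; lra.
Qed.

Lemma tanh_half_crossing_anomaly : tanh_half crossing_anomaly = tan_k_PI_half / kepler_M.
Proof.
  pose proof tan_k_PI_half_div_M_bound. unfold tanh_half, crossing_anomaly.
  set (q := tan_k_PI_half / kepler_M) in *.
  rewrite exp_ln by (apply Rdiv_lt_0_compat; lra). field. lra.
Qed.

Lemma crossing_anomaly_pos : 0 < crossing_anomaly.
Proof.
  pose proof tan_k_PI_half_div_M_bound. unfold crossing_anomaly.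
  set (q := tan_k_PI_half / kepler_M) in *.
  rewrite <- ln_1. apply ln_increasing; [lra |].
  replace ((1 + q) / (1 - q)) with (1 + 2 * q / (1 - q)) by (field; lra).
  pose proof (Rdiv_lt_0_compat (2 * q) (1 - q) ltac:(lra) ltac:(lra)). lra.
Qed.

Lemma kepler_angle_crossing_anomaly : kepler_angle crossing_anomaly = PI.
Proof.
  pose proof kepler_M_pos. pose proof k_PI_half_bound.
  unfold kepler_angle. rewrite tanh_half_crossing_anomaly.
  replace (kepler_M * (tan_k_PI_half / kepler_M)) with tan_k_PI_half by (field; lra).
  unfold tan_k_PI_half. rewrite atan_tan by lra. field. lra.
Qed.

Definition half_period := kepler_time crossing_anomaly.

Definition arc_angle (t : R) := polar_angle (t - half_period).

Lemma half_period_pos : 0 < half_period.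
Proof.
  unfold half_period. pose proof crossing_anomaly_pos.
  pose proof (expanding_growth _ _ _ is_derive_kepler_time kepler_time'_ge 0 crossing_anomaly
                ltac:(lra)).
  pose proof kepler_time'_lb_pos.
  assert (kepler_time 0 = 0) by (unfold kepler_time; rewrite sinh_0; ring). nra.
Qed.

Lemma is_derive_arc_angle t : is_derive arc_angle t (ang_mom * binet_u (arc_angle t) ^ 2).
Proof.
  unfold arc_angle.
  replace (ang_mom * binet_u (polar_angle (t - half_period)) ^ 2)
    with (scal 1 (ang_mom * binet_u (polar_angle (t - half_period)) ^ 2))
    by (unfold scal; simpl; unfold mult; simpl; ring).
  apply (is_derive_comp polar_angle); [apply is_derive_polar_angle | auto_derive; auto].
Qed.

Lemma binet_u_arc_angle_pos t : 0 < binet_u (arc_angle t).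
Proof. apply binet_u_kepler_angle_pos. Qed.

Lemma arc_angle_start : arc_angle 0 = - PI.
Proof.
  unfold arc_angle, polar_angle, half_period.
  rewrite Rminus_0_l, <- kepler_time_opp, inv_kepler_time, kepler_angle_opp,
    kepler_angle_crossing_anomaly.
  reflexivity.
Qed.

Lemma arc_angle_end : arc_angle (2 * half_period) = PI.
Proof.
  unfold arc_angle, polar_angle.
  replace (2 * half_period - half_period) with (kepler_time crossing_anomaly)
    by (unfold half_period; ring).
  rewrite inv_kepler_time. apply kepler_angle_crossing_anomaly.
Qed.

Lemma arc_angle_range t : 0 < t < 2 * half_period -> - PI < arc_angle t < PI.
Proof.
  intros Ht. unfold arc_angle, polar_angle.
  rewrite <- kepler_angle_crossing_anomaly, <- kepler_angle_opp.
  split; apply kepler_angle_lt.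
  - rewrite <- (inv_kepler_time (- crossing_anomaly)).
    apply inv_kepler_time_lt. rewrite kepler_time_opp. fold half_period. lra.
  - rewrite <- (inv_kepler_time crossing_anomaly).
    apply inv_kepler_time_lt. fold half_period. lra.
Qed.

Definition arc := orbit arc_angle.

Lemma binet_vx_PI : binet_vx PI = ang_mom / L.
Proof. unfold binet_vx. rewrite sin_PI, cos_PI, Hu_PI. field. lra. Qed.

Lemma binet_vx_neg_PI : binet_vx (- PI) = ang_mom / L.
Proof.
  unfold binet_vx. rewrite sin_neg, cos_neg, sin_PI, cos_PI, binet_u_even, Hu_PI. field. lra.
Qed.

Lemma arc_start : arc 0 = (0, - L).
Proof.
  unfold arc, orbit, binet_point. rewrite arc_angle_start, binet_u_even, Hu_PI, sin_neg, cos_neg,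
    sin_PI, cos_PI.
  f_equal; field; lra.
Qed.

Lemma arc_end : arc (2 * half_period) = (0, - L).
Proof.
  unfold arc, orbit, binet_point. rewrite arc_angle_end, Hu_PI, sin_PI, cos_PI.
  f_equal; field; lra.
Qed.

Lemma arc_above_ell t : 0 < t < 2 * half_period -> in_P L (arc t).
Proof.
  intros Ht. unfold in_P, arc, orbit, binet_point; cbn [snd].
  pose proof (arc_angle_range t Ht) as Hr. pose proof (binet_u_PI_lt _ Hr) as Hlt.
  pose proof (COS_bound (arc_angle t)). pose proof (binet_u_arc_angle_pos t).
  rewrite Hu_PI in Hlt. set (u := binet_u (arc_angle t)) in *.
  assert (HLu : 1 < L * u).
  { apply (Rmult_lt_reg_l (/ L)); [apply Rinv_0_lt_compat, HL |].
    rewrite <- Rmult_assoc, Rinv_l, Rmult_1_l, Rmult_1_r by lra. exact Hlt. }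
  apply Rlt_gt, (Rmult_lt_reg_r u); [lra |].
  unfold Rdiv. rewrite Rmult_assoc, Rinv_l by lra. lra.
Qed.

Lemma arc_solution : is_solution beta arc.
Proof. apply orbit_solution; [apply is_derive_arc_angle | apply binet_u_arc_angle_pos]. Qed.

Lemma arc_energy t : energy beta arc t = h.
Proof. apply orbit_energy; [apply is_derive_arc_angle | apply binet_u_arc_angle_pos]. Qed.

Lemma arc_start_angle : angle (vel arc 0) (1, 0) < PI / 2.
Proof.
  apply angle_e1_lt. unfold arc.
  rewrite (vel_orbit _ is_derive_arc_angle binet_u_arc_angle_pos); cbn [fst].
  rewrite arc_angle_start, binet_vx_neg_PI. apply Rdiv_lt_0_compat; [apply ang_mom_pos | exact HL].
Qed.

Lemma arc_end_angle : angle (-1, 0) (vel arc (2 * half_period)) > PI / 2.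
Proof.
  apply angle_neg_e1_gt. unfold arc.
  rewrite (vel_orbit _ is_derive_arc_angle binet_u_arc_angle_pos); cbn [fst].
  rewrite arc_angle_end, binet_vx_PI. apply Rdiv_lt_0_compat; [apply ang_mom_pos | exact HL].
Qed.

Lemma Ind_arc : Ind arc 0 (2 * half_period) = RtoC 1.
Proof.
  unfold Ind. rewrite arc_start, arc_end, cint_dz_over_z_segment_refl. unfold arc.
  rewrite (cint_dz_over_z_orbit _ is_derive_arc_angle binet_u_arc_angle_pos).
  rewrite arc_angle_start, arc_angle_end, binet_u_even.
  pose proof PI_RGT_0.
  unfold Cmult, Cinv, Cplus, RtoC, Ci; cbn [fst snd]. f_equal; field; lra.
Qed.

End Crossing.

End Orbit.

Section ChoiceOfK.

Variables beta h : R.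
Hypotheses (Hb : 0 < beta) (Hh : 0 < h).

Lemma binet_u_PI_continuous k : 0 < k < 1 -> continuity_pt (fun x => binet_u beta h x PI) k.
Proof.
  intros Hk. apply continuity_pt_filterlim.
  apply (ex_derive_continuous (V := R_NormedModule) (fun x => binet_u beta h x PI)).
  pose proof (binet_a_pos beta k Hb Hk) as Ha. pose proof (pow_lt k 2 (proj1 Hk)).
  unfold binet_a in Ha.
  pose proof (Rmult_lt_0_compat (2 * h) _ ltac:(lra) Ha).
  pose proof (pow2_ge_0 ((1 - k ^ 2) / (2 * beta * k ^ 2))).
  unfold binet_u, binet_b, binet_a. auto_derive. simpl in *.
  repeat split; try lra; apply Rgt_not_eq; repeat apply Rmult_lt_0_compat; lra.
Qed.

Lemma binet_a_le_u_PI k : 0 < k <= 1 / 2 -> binet_a beta k <= binet_u beta h k PI.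
Proof.
  intros Hk. pose proof PI_RGT_0. unfold binet_u.
  assert (0 <= cos (k * PI)).
  { apply cos_ge_0; [| pose proof (Rmult_le_compat_r PI k (1 / 2))]; nra. }
  pose proof (sqrt_pos (binet_a beta k ^ 2 + 2 * h * binet_a beta k)).
  unfold binet_b. nra.
Qed.

Lemma binet_u_PI_neg k : 3 / 4 < k < 1 -> binet_a beta k < 2 * h -> binet_u beta h k PI < 0.
Proof.
  intros Hk Ha2. pose proof PI_RGT_0.
  pose proof (binet_a_pos beta k Hb ltac:(lra)) as Ha.
  pose proof (binet_b_sq beta h k Hb Hh ltac:(lra)) as Hb2.
  assert (Hbp : 0 <= binet_b beta h k) by apply sqrt_pos.
  set (r := / sqrt 2).
  assert (Hs2 : 0 < sqrt 2) by (apply sqrt_lt_R0; lra).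
  assert (Hr : r ^ 2 = 1 / 2).
  { unfold r. rewrite pow_inv. simpl. rewrite Rmult_1_r, sqrt_sqrt by lra. field. }
  assert (Hrp : 0 < r) by (apply Rinv_0_lt_compat, Hs2).
  assert (Hc : cos (k * PI) < - r).
  { replace (- r) with (cos (3 * (PI / 4))) by (rewrite cos_3PI4; unfold r; field; lra).
    apply cos_decreasing_1; nra. }
  assert (Hbr : binet_a beta k < binet_b beta h k * r).
  { destruct (Rlt_or_le (binet_a beta k) (binet_b beta h k * r)) as [Hlt | Hle]; [exact Hlt |].
    pose proof (pow_incr _ _ 2 (conj (Rmult_le_pos _ _ Hbp (Rlt_le _ _ Hrp)) Hle)) as Hsq.
    rewrite Rpow_mult_distr, Hb2, Hr in Hsq. nra. }
  unfold binet_u. nra.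
Qed.

Lemma exists_k_binet_a_large L : 0 < L -> exists k, 0 < k <= 1 / 2 /\ / L < binet_a beta k.
Proof.
  intros HL. set (q := L / (4 * (L + beta))).
  assert (Hq : 0 < q < 1 / 4).
  { split; [apply Rdiv_lt_0_compat; lra |].
    apply (Rmult_lt_reg_r (4 * (L + beta))); [lra |]. unfold q, Rdiv.
    rewrite Rmult_assoc, Rinv_l; lra. }
  exists (sqrt q). pose proof (sqrt_lt_R0 q ltac:(lra)).
  pose proof (pow2_sqrt q ltac:(lra)) as Hsq.
  split; [nra |].
  unfold binet_a. rewrite Hsq. unfold q.
  replace ((1 - L / (4 * (L + beta))) / (2 * beta * (L / (4 * (L + beta)))))
    with (/ L + (3 * L + 2 * beta) / (2 * beta * L)) by (field; lra).
  pose proof (Rdiv_lt_0_compat (3 * L + 2 * beta) (2 * beta * L) ltac:(lra) ltac:(nra)). lra.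
Qed.

Lemma exists_k_binet_a_small : exists k, 3 / 4 < k < 1 /\ binet_a beta k < 2 * h.
Proof.
  set (x := h * beta). assert (Hx : 0 < x) by (apply Rmult_lt_0_compat; lra).
  set (q := 1 - x / (1 + 4 * x)).
  assert (Hxq : x / (1 + 4 * x) < 1 / 4).
  { apply (Rmult_lt_reg_r (1 + 4 * x)); [lra |]. unfold Rdiv.
    rewrite Rmult_assoc, Rinv_l; lra. }
  assert (Hxq0 : 0 < x / (1 + 4 * x)) by (apply Rdiv_lt_0_compat; lra).
  assert (Hq : 3 / 4 < q < 1) by (unfold q; lra).
  exists (sqrt q). pose proof (sqrt_lt_R0 q ltac:(lra)).
  pose proof (pow2_sqrt q ltac:(lra)) as Hsq.
  split; [split; nra |].
  unfold binet_a. rewrite Hsq.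
  replace (1 - q) with (x / (1 + 4 * x)) by (unfold q; ring).
  apply (Rmult_lt_reg_r (2 * beta * q)); [unfold q; nra |].
  replace (x / (1 + 4 * x) / (2 * beta * q) * (2 * beta * q)) with (x / (1 + 4 * x))
    by (field; unfold q; lra).
  assert (x / (1 + 4 * x) < x).
  { apply (Rmult_lt_reg_r (1 + 4 * x)); [lra |]. unfold Rdiv.
    rewrite Rmult_assoc, Rinv_l; nra. }
  replace (2 * h * (2 * beta * q)) with (4 * x * q) by (unfold x; ring). nra.
Qed.

Lemma exists_k_binet_u_PI L : 0 < L -> exists k, 0 < k < 1 /\ binet_u beta h k PI = / L.
Proof.
  intros HL.
  destruct (exists_k_binet_a_large L HL) as [k1 [Hk1 Ha1]].
  destruct exists_k_binet_a_small as [k2 [Hk2 Ha2]].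
  pose proof (binet_a_le_u_PI k1 Hk1). pose proof (binet_u_PI_neg k2 Hk2 Ha2).
  pose proof (Rinv_0_lt_compat L HL).
  destruct (IVT_interv (fun k => / L - binet_u beta h k PI) k1 k2) as [k [Hk Hz]];
    [| lra .. |].
  - intros a Ha. apply continuity_pt_minus.
    + apply continuity_pt_const. intros ? ?. reflexivity.
    + apply binet_u_PI_continuous. lra.
  - exists k. split; lra.
Qed.

End ChoiceOfK.

Theorem lemma2p2 (L h beta : R) (hL : 0 < L) (hh : 0 < h) (hb : 0 < beta) :
  exists (Z : R -> R * R) (T : R),
    is_solution beta Z /\
    (forall t, energy beta Z t = h) /\
    (* (i) *)
    0 < T /\ in_ell L (Z 0) /\ in_ell L (Z T) /\
    (forall t, 0 < t < T -> in_P L (Z t)) /\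
    (* (ii) *)
    angle (vel Z 0) (1, 0) < PI / 2 /\
    angle (-1, 0) (vel Z T) > PI / 2 /\
    (* (iii) *)
    Ind Z 0 T = RtoC 1.
Proof.
  destruct (exists_k_binet_u_PI beta h hb hh L hL) as [k [Hk Hu_PI]].
  exists (arc beta h k), (2 * half_period beta h k).
  split; [| split; [| split; [| split; [| split; [| split; [| split; [| split]]]]]]].
  - apply arc_solution; auto.
  - intros t. apply arc_energy; auto.
  - pose proof (half_period_pos beta h k hb hh Hk L hL Hu_PI). lra.
  - unfold in_ell. now rewrite (arc_start beta h k hb hh Hk L hL Hu_PI).
  - unfold in_ell. now rewrite (arc_end beta h k hb hh Hk L hL Hu_PI).
  - apply arc_above_ell; auto.
  - apply arc_start_angle with L; auto.
  - apply arc_end_angle with L; auto.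
  - apply Ind_arc with L; auto.
Qed.
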